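(* If the hazard function $\lambda(t)$ of the random lifetime $X$ is decreasing in $t\in\mathcal S$, then $$H^w(t)\ge -\delta(t)\log\lambda(t)\qquad\text{for all } t\in\mathcal S.$$
   Context: $X$ is an absolutely continuous non-negative random variable with density $f$, support $\mathcal S=(0,\nu)$, $\nu\le+\infty$, survival function $\overline F$, and hazard function $\lambda(t)=f(t)/\overline F(t)$; ''decreasing'' means non-increasing; $\log$ is the natural logarithm. Weighted residual entropy: $H^w(t)=-\int_t^{\infty}x\,\frac{f(x)}{\overline F(t)}\log\frac{f(x)}{\overline F(t)}\,dx$. Conditional mean: $\delta(t)=\mathrm{E}(X\mid X>t)=\frac{1}{\overline F(t)}\int_t^\infty x f(x)\,dx$. *)

From HB Require Import structures.
From mathcomp Require Import all_boot all_order all_algebra.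
From mathcomp Require Import all_classical all_reals all_analysis.
Set Implicit Arguments. Unset Strict Implicit. Unset Printing Implicit Defensive.
Import Order.TTheory GRing.Theory Num.Theory.
Local Open Scope classical_set_scope.
Local Open Scope ring_scope.

Section Defs.
Variable R : realType.
Local Notation mu := (@lebesgue_measure R).

Definition in_support (nu : \bar R) (t : R) : Prop := 0 < t /\ (t%:E < nu)%E.

Definition is_density_on (f : R -> R) (nu : \bar R) : Prop :=
  [/\ measurable_fun setT f,
      mu.-integrable setT (EFin \o f),
      (\int[mu]_x (f x)%:E = 1)%E,
      (forall x, in_support nu x -> 0 < f x) &
      (forall x, ~ in_support nu x -> f x = 0)].

Definition survival (f : R -> R) (t : R) : R := Rintegral mu `]t, +oo[ f.

Definition hazard (f : R -> R) (t : R) : R := f t / survival f t.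

Definition wre_integrand (f : R -> R) (t : R) : R -> R :=
  fun x => x * (f x / survival f t) * ln (f x / survival f t).

Definition weighted_residual_entropy (f : R -> R) (t : R) : R :=
  - Rintegral mu `]t, +oo[ (wre_integrand f t).

Definition cond_mean (f : R -> R) (t : R) : R :=
  (survival f t)^-1 * Rintegral mu `]t, +oo[ (fun x => x * f x).

End Defs.

From HB Require Import structures.
From mathcomp Require Import all_boot all_order all_algebra.
From mathcomp Require Import all_classical all_reals all_analysis.
From mathcomp Require Import measurable_realfun ring.
Set Implicit Arguments.
Unset Strict Implicit.
Unset Printing Implicit Defensive.
Import Order.TTheory GRing.Theory Num.Theory.
Local Open Scope classical_set_scope.
Local Open Scope ring_scope.

(* For x > t in the support, f(x)/Fbar(t) <= f(x)/Fbar(x) = lambda(x) <= lambda(t),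
   since Fbar is nonincreasing and lambda is decreasing.  Hence the integrand of
   H^w(t) is pointwise at most x f(x)/Fbar(t) * log lambda(t), whose integral over
   (t, +oo) is delta(t) log lambda(t). *)

Lemma in_support_openr (R : realType) (nu : \bar R) x : in_support nu x ->
  exists2 b, x < b & forall y, x < y -> y < b -> in_support nu y.
Proof.
case=> x0; case: nu => [r| |] /= xnu.
- exists r; first by rewrite -lte_fin.
  by move=> y xy yr; split; [exact: lt_trans xy | rewrite lte_fin].
- exists (x + 1); first by rewrite ltrDl.
  by move=> y xy _; split; [exact: lt_trans xy | exact: ltry].
- by move: xnu; rewrite ltNge leNye.
Qed.

Section Density.
Variables (R : realType) (f : R -> R) (nu : \bar R).
Hypothesis hf : is_density_on f nu.
Local Notation mu := (@lebesgue_measure R).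

Lemma density_ge0 x : 0 <= f x.
Proof.
case: hf => _ _ _ hp hz.
by have [/hp/ltW //|/hz ->] := pselect (in_support nu x).
Qed.

Lemma density_integrable_itv t : mu.-integrable `]t, +oo[ (EFin \o f).
Proof. by case: hf => _ intf _ _ _; exact: integrableS intf. Qed.

Lemma survival_le s t : s <= t -> survival f t <= survival f s.
Proof.
move=> st; case: hf => mf _ _ _ _.
rewrite /survival /Rintegral fine_le //; try exact/integrable_fin_num/density_integrable_itv.
apply: ge0_subset_integral => //.
- by apply/measurable_EFinP; exact: measurable_funS mf.
- by move=> y _; rewrite lee_fin density_ge0.
- by move=> y /=; rewrite !in_itv /= !andbT; exact: le_lt_trans.
Qed.

Lemma survival_gt0 t : in_support nu t -> 0 < survival f t.
Proof.
move=> ht; case: hf => _ _ _ hp _.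
have intt := density_integrable_itv t.
have S0 : 0 <= survival f t by apply: Rintegral_ge0 => y _; exact: density_ge0.
rewrite lt_def S0 andbT; apply/eqP => St0.
have I0 : (\int[mu]_(y in `]t, +oo[) `|(EFin \o f) y| = 0)%E.
  transitivity (\int[mu]_(y in `]t, +oo[) (EFin \o f) y)%E.
    by apply: eq_integral => y _; rewrite /= ger0_norm ?density_ge0.
  rewrite -(fineK (integrable_fin_num _ intt)) //.
  by move: St0; rewrite /survival /Rintegral => ->.
(* f vanishes a.e. on (t, +oo), yet f > 0 on a nondegenerate interval (t, b). *)
have [N [mN N0 sub]] :=
  (ae_eq_integral_abs mu (measurable_itv _) (measurable_int _ intt)).1 I0.
have [b tb hb] := in_support_openr ht.
have : (mu `]t, b[ <= mu N)%E.
  apply: le_measure; rewrite ?inE; [exact: measurable_itv | exact: mN |].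
  move=> y /=; rewrite in_itv /= => /andP[ty yb]; apply: sub => /= H.
  have := H; rewrite in_itv /= ty => /(_ isT) [] /eqP.
  by rewrite gt_eqF // hp //; exact: hb.
by rewrite N0 lebesgue_measure_itv /= lte_fin tb -EFinD lee_fin leNgt subr_gt0 tb.
Qed.

Hypothesis hdec : forall s t, in_support nu s -> in_support nu t -> s <= t ->
  hazard f t <= hazard f s.

Lemma density_div_survival_le_hazard t x : in_support nu t -> in_support nu x ->
  t <= x -> f x / survival f t <= hazard f t.
Proof.
move=> ht hx tx; apply: le_trans (hdec ht hx tx).
rewrite /hazard ler_wpM2l ?density_ge0 // lef_pV2 ?posrE ?survival_gt0 //.
exact: survival_le.
Qed.

Lemma wre_integrand_le t x : in_support nu t -> t < x ->
  wre_integrand f t x <= (survival f t)^-1 * ln (hazard f t) * (x * f x).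
Proof.
move=> ht tx; rewrite /wre_integrand.
have [->|fx0] := eqVneq (f x) 0; first by rewrite !(mul0r, mulr0).
have hx : in_support nu x.
  by apply: contrapT => hx; move: fx0; case: hf => _ _ _ _ -> //; rewrite eqxx.
have fxt_gt0 : 0 < f x / survival f t.
  by rewrite divr_gt0 ?survival_gt0 // lt_def fx0 density_ge0.
have x_ge0 : 0 <= x by case: hx => /ltW.
apply: (@le_trans _ _ (x * (f x / survival f t) * ln (hazard f t))).
  have le_hazard := density_div_survival_le_hazard ht hx (ltW tx).
  apply: ler_wpM2l; first exact: mulr_ge0 x_ge0 (ltW fxt_gt0).
  by rewrite ler_ln ?posrE // (lt_le_trans fxt_gt0 le_hazard).
by rewrite le_eqVlt; apply/orP; left; apply/eqP; ring.
Qed.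

End Density.

Theorem theorem3p3 (R : realType) (f : R -> R) (nu : \bar R)
  (hnu : (0 < nu)%E)
  (hf : is_density_on f nu)
  (hmean : (@lebesgue_measure R).-integrable setT (EFin \o (fun x => x * f x)))
  (hHw : forall t, in_support nu t ->
     (@lebesgue_measure R).-integrable `]t, +oo[ (EFin \o wre_integrand f t))
  (hdec : forall s t, in_support nu s -> in_support nu t -> s <= t ->
     hazard f t <= hazard f s) :
  forall t, in_support nu t ->
    weighted_residual_entropy f t >= - (cond_mean f t * ln (hazard f t)).
Proof.
move=> t ht.
have imean : (@lebesgue_measure R).-integrable `]t, +oo[ (EFin \o (fun x => x * f x)).
  by apply: integrableS hmean.
rewrite /weighted_residual_entropy /cond_mean lerN2 mulrAC -RintegralZl //.
apply: le_Rintegral => //; first exact: hHw.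
  by apply: eq_integrable (integrableZl _ _ imean).
move=> x; rewrite /= in_itv /= andbT => tx.
by have := wre_integrand_le hf hdec ht tx; rewrite /wre_integrand.
Qed.
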